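(* Let $k\ge1$ and let $\alpha_1\ge\alpha_2\ge\dots\ge\alpha_k$ be real numbers in $[0,1]$ with $\alpha_1+\dots+\alpha_k=1$ (where $\alpha_2:=0$ if $k=1$). Let $0\le\delta\le\frac1{16}$. Then at least one of the following holds: (A) $\alpha_1\ge\frac13+\frac23\delta$; (B) $\alpha_1+\alpha_2\ge\frac12+\delta$; (C) there is a non-empty subset $I\subseteq\{1,\dots,k\}$ with $2\delta\le\sum_{i\in I}\alpha_i\le\frac13-\frac43\delta$. *)

From mathcomp Require Import all_boot all_order all_algebra.
From mathcomp Require Import reals.
Set Implicit Arguments. Unset Strict Implicit. Unset Printing Implicit Defensive.
Import Order.TTheory GRing.Theory Num.Theory.
Local Open Scope ring_scope.

(* The sequence alpha_1,...,alpha_k is alpha : 'I_k -> R, with alpha_(i+1) = alpha i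
   (0-based indexing). [alpha_nth alpha j] is alpha_(j+1) if j < k and 0 otherwise,
   realizing the convention alpha_2 := 0 when k = 1. *)
Definition alpha_nth (R : realType) (k : nat) (alpha : 'I_k -> R) (j : nat) : R :=
  match insub j with Some i => alpha i | None => 0 end.

From mathcomp Require Import all_boot all_order all_algebra.
From mathcomp Require Import reals.
From mathcomp Require Import lra.
Import Order.TTheory GRing.Theory Num.Theory.
Local Open Scope ring_scope.

(* Index from 0, let [L := 1/3 - 4/3 delta] and follow the tail sums
   [T n := alpha_n + ... + alpha_(k-1)], which decrease from [T 0 = 1 > L] to [T k = 0 <= L];
   pick [j] with [T (j+1) <= L < T j].  If [T (j+1) >= 2 delta] and the tail [{j+1, ..., k-1}]
   is nonempty, it witnesses (C).  Otherwise [alpha_j > L - 2 delta >= 2 delta] (this is where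
   [delta <= 1/16] is used), so either [{j}] witnesses (C), or [alpha_0 >= ... >= alpha_j > L >= 1/4]
   and the first [j + 1] terms carry mass [> 1 - 2 delta]; then [j <= 2], and (A) or (B)
   follows by counting. *)

Lemma exists_crossing (R : realType) (T : nat -> R) (L : R) (k : nat) :
  L < T 0%N -> T k <= L -> exists j, [/\ (j < k)%N, L < T j & T j.+1 <= L].
Proof.
move=> LT0; elim: k => [|k IHk] TkL; first by move: LT0; rewrite ltNge TkL.
case: (leP (T k) L) => [TkL'|LTk]; last by exists k.
by have [j [jk ? ?]] := IHk TkL'; exists j; split => //; apply: ltnW.
Qed.

Lemma head_sum_cases {R : realType} {a : nat -> R} {n : nat} {delta : R} :
  0 <= delta <= 1 / 16 -> (0 < n)%N ->
  (forall i j, (i <= j)%N -> (j < n)%N -> a j <= a i) ->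
  (forall i, (i < n)%N -> 1 / 3 - 4 / 3 * delta < a i) ->
  1 - 2 * delta <= \sum_(0 <= i < n) a i <= 1 ->
  a 0%N >= 1 / 3 + 2 / 3 * delta \/ a 0%N + a 1%N >= 1 / 2 + delta.
Proof.
move=> /andP[d0 d16] n0 a_noninc a_large /andP[mass_lo mass_hi].
case: n n0 a_noninc a_large mass_lo mass_hi => [|[|[|[|n]]]] // _ a_noninc a_large.
- by rewrite big_nat1 => ? _; left; lra.
- by rewrite big_nat_recr //= big_nat1 => ? _; right; lra.
- rewrite !big_nat_recr //= big_geq // add0r => ? _.
  have := a_noninc 1%N 2%N isT isT; have := a_noninc 0%N 1%N isT isT.
  by right; lra.
- have head4_le : \sum_(0 <= i < 4) a i <= \sum_(0 <= i < n.+4) a i.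
    rewrite (@big_cat_nat _ _ _ 4 0 n.+4) //= lerDl big_nat_cond.
    apply: sumr_ge0 => i /andP[/andP[_ ilt] _].
    by apply: ltW; apply: le_lt_trans (a_large i ilt); lra.
  have head4 : \sum_(0 <= i < 4) a i = a 0%N + a 1%N + a 2%N + a 3%N.
    by rewrite !big_nat_recr //= big_geq // add0r.
  move=> _ mass_hi.
  by have := a_large 0%N isT; have := a_large 1%N isT;
     have := a_large 2%N isT; have := a_large 3%N isT; lra.
Qed.

Section PaddedSequence.

Context {R : realType} {k : nat} (alpha : 'I_k -> R).

Lemma alpha_nthE (i : 'I_k) : alpha_nth alpha i = alpha i.
Proof. by rewrite /alpha_nth valK. Qed.

Lemma alpha_nth_default (j : nat) : (k <= j)%N -> alpha_nth alpha j = 0.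
Proof. by move=> kj; rewrite /alpha_nth insubN // -leqNgt. Qed.

Lemma alpha_nth_ge0 : (forall i, 0 <= alpha i) -> forall j, 0 <= alpha_nth alpha j.
Proof.
move=> alpha_ge0 j; case: (ltnP j k) => [jk|kj]; last by rewrite alpha_nth_default.
by rewrite (alpha_nthE (Ordinal jk)).
Qed.

Lemma alpha_nth_noninc {i j : nat} :
    (forall i' j' : 'I_k, (i' <= j')%N -> alpha j' <= alpha i') ->
  (i <= j)%N -> (j < k)%N -> alpha_nth alpha j <= alpha_nth alpha i.
Proof.
move=> alpha_noninc ij jk; have ik := leq_ltn_trans ij jk.
by rewrite (alpha_nthE (Ordinal ik)) (alpha_nthE (Ordinal jk)); apply: alpha_noninc.
Qed.

Lemma sum_alpha_nth : \sum_(0 <= i < k) alpha_nth alpha i = \sum_(i < k) alpha i.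
Proof. by rewrite big_mkord; apply: eq_bigr => i _; rewrite alpha_nthE. Qed.

Lemma nonempty_tail_subset {n : nat} : (n < k)%N ->
  exists2 I : {set 'I_k}, I != set0 & \sum_(i in I) alpha i = \sum_(n <= i < k) alpha_nth alpha i.
Proof.
move=> nk; exists [set i : 'I_k | (n <= i)%N].
  by apply/set0Pn; exists (Ordinal nk); rewrite inE.
by rewrite big_geq_mkord; apply: eq_big => [i|i _]; rewrite ?inE ?alpha_nthE.
Qed.

Lemma nonempty_singleton_subset {j : nat} : (j < k)%N ->
  exists2 I : {set 'I_k}, I != set0 & \sum_(i in I) alpha i = alpha_nth alpha j.
Proof.
move=> jk; exists [set Ordinal jk]; first by apply/set0Pn; exists (Ordinal jk); rewrite inE.
by rewrite big_set1 (alpha_nthE (Ordinal jk)).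
Qed.

End PaddedSequence.

Theorem lemma6p2 (R : realType) (k : nat) (alpha : 'I_k -> R) (delta : R) :
  (1 <= k)%N ->
  (forall i : 'I_k, 0 <= alpha i <= 1) ->
  (forall i j : 'I_k, (i <= j)%N -> alpha j <= alpha i) ->
  \sum_(i < k) alpha i = 1 ->
  0 <= delta <= 1 / 16 ->
  [\/ alpha_nth alpha 0 >= 1 / 3 + 2 / 3 * delta,
      alpha_nth alpha 0 + alpha_nth alpha 1 >= 1 / 2 + delta
    | exists I : {set 'I_k},
        I != set0 /\
        2 * delta <= \sum_(i in I) alpha i <= 1 / 3 - 4 / 3 * delta].
Proof.
move=> _ alpha01 alpha_noninc sum1 d_range; have /andP[d0 d16] := d_range.
set a := alpha_nth alpha; set L := 1 / 3 - 4 / 3 * delta.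
pose T n := \sum_(n <= i < k) a i.
have a_ge0 : forall j, 0 <= a j by apply: alpha_nth_ge0 => i; case/andP: (alpha01 i).
have suma : \sum_(0 <= i < k) a i = 1 by rewrite sum_alpha_nth.
have C_of_witness s : (exists2 I : {set 'I_k}, I != set0 & \sum_(i in I) alpha i = s) ->
    2 * delta <= s <= L -> exists I : {set 'I_k}, I != set0 /\ 2 * delta <= \sum_(i in I) alpha i <= L.
  by case=> I I0 <- sI; exists I.
have [j [jk LTj TjL]] : exists j, [/\ (j < k)%N, L < T j & T j.+1 <= L].
  by apply: exists_crossing; rewrite /T ?suma ?big_geq // /L; lra.
have [[tail_large j1k] | tail_small] : 2 * delta <= T j.+1 /\ (j.+1 < k)%N \/ T j.+1 <= 2 * delta.
- case: (ltnP j.+1 k) => [j1k|kj1]; last by right; rewrite /T big_geq // mulr_ge0.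
  by case: (leP (2 * delta) (T j.+1)) => h; [left | right; apply: ltW].
- by apply: Or33; apply: (C_of_witness _ (nonempty_tail_subset alpha j1k)); rewrite tail_large.
have [ajL | Laj] := leP (a j) L.
  apply: Or33; apply: (C_of_witness _ (nonempty_singleton_subset alpha jk)); rewrite ajL andbT.
  have aj : a j = T j - T j.+1 by rewrite /T big_ltn // addrK.
  by rewrite -/a aj; rewrite /L in LTj *; lra.
have a_noninc i i' : (i <= i')%N -> (i' < j.+1)%N -> a i' <= a i.
  by move=> ii' i'j; apply: (alpha_nth_noninc _ alpha_noninc ii' (leq_trans i'j jk)).
have a_large i : (i < j.+1)%N -> L < a i.
  by move=> ij; apply: lt_le_trans Laj (a_noninc i j ij (ltnSn j)).
have head_mass : 1 - 2 * delta <= \sum_(0 <= i < j.+1) a i <= 1.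
  have -> : \sum_(0 <= i < j.+1) a i = 1 - T j.+1.
    by rewrite -suma (@big_cat_nat _ _ _ j.+1 0 k) ?addrK.
  have : 0 <= T j.+1 by apply: sumr_ge0.
  by move=> ?; apply/andP; split; lra.
by case: (head_sum_cases d_range (ltn0Sn j) a_noninc a_large head_mass) => ?;
  [apply: Or31 | apply: Or32].
Qed.
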